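(* Let $W:\mathbb{N}^\star\times\mathbb{N}^\star\to\mathbb{C}$ be such that $F\,\square_W\,G\in\mathbb{M}$ and $F\,\square_W\,G=G\,\square_W\,F$ for all $F,G\in\mathbb{M}$. Then $(F\,\square_W\,G)\,\square_W\,H=F\,\square_W\,(G\,\square_W\,H)$ for all $F,G,H\in\mathbb{M}$ if and only if $W(a,b)W(ab,c)=W(b,c)W(bc,a)$ for all $a,b,c\in\mathbb{N}^\star$.
   Context: $\mathbb{M}$ is the set of functions $F:\mathbb{N}^\star\to\mathbb{C}$ with $F(1)=1$ and $F(ab)=F(a)F(b)$ whenever $\gcd(a,b)=1$. For a weight $W$, $(F\,\square_W\,G)(m)=\sum_{ab=m}F(a)G(b)W(a,b)$. *)

(* The complex numbers C are rendered as an arbitrary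
   numeric algebraically closed field (numClosedFieldType). *)
From HB Require Import structures.
From mathcomp Require Import all_boot all_order all_algebra.
Set Implicit Arguments. Unset Strict Implicit. Unset Printing Implicit Defensive.
Import Order.TTheory GRing.Theory Num.Theory.
Local Open Scope ring_scope.

(* Functions N* -> C are represented as nat -> C; only values at n >= 1 matter. *)

Definition arith_mult (C : numClosedFieldType) (F : nat -> C) : Prop :=
  F 1%N = 1 /\
  forall a b : nat, (0 < a)%N -> (0 < b)%N -> coprime a b -> F (a * b)%N = F a * F b.

Definition wconv (C : numClosedFieldType) (W : nat -> nat -> C) (F G : nat -> C)
  (m : nat) : C :=
  \sum_(a <- divisors m) F a * G (m %/ a)%N * W a (m %/ a)%N.

(* Both iterated products expand into sums over ordered factorisations m = x y z:
   ((F □ G) □ H)(m) = sum F(x) G(y) H(z) W(x,y) W(xy,z), and, using commutativity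
   to write F □ (G □ H) = (G □ H) □ F and relabelling cyclically,
   (F □ (G □ H))(m) = sum F(x) G(y) H(z) W(y,z) W(yz,x).  The identity on W
   makes the two sums agree term by term.  Conversely, for the multiplicative
   indicators of the divisors of a, b and c, only the factorisation (a, b, c) of abc
   contributes to either sum, so associativity at abc is exactly the identity. *)

From mathcomp Require Import all_boot all_algebra.
Set Implicit Arguments. Unset Strict Implicit. Unset Printing Implicit Defensive.
Import GRing.Theory.
Local Open Scope ring_scope.

Lemma dvdn_mul_eq (a b x y : nat) : (0 < a * b)%N ->
  (x %| a)%N -> (y %| b)%N -> (x * y = a * b)%N -> x = a /\ y = b.
Proof.
move=> ab0 /dvdnP[k ea] /dvdnP[l eb] exy; subst a b.
have xy0 : (0 < x * y)%N by move: ab0; rewrite mulnACA muln_gt0 => /andP[].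
have /eqP : (k * l * (x * y) = 1 * (x * y))%N by rewrite mul1n {2}exy mulnACA.
by rewrite eqn_pmul2r // muln_eq1 => /andP[/eqP-> /eqP->]; rewrite !mul1n.
Qed.

Lemma dvdn_mul3_eq (a b c x y z : nat) : (0 < a * b * c)%N ->
  (x %| a)%N -> (y %| b)%N -> (z %| c)%N -> (x * y * z = a * b * c)%N ->
  [/\ x = a, y = b & z = c].
Proof.
move=> abc0 xa yb zc exyz.
have [exy ->] := dvdn_mul_eq abc0 (dvdn_mul xa yb) zc exyz.
have ab0 : (0 < a * b)%N by move: abc0; rewrite muln_gt0 => /andP[].
by have [-> ->] := dvdn_mul_eq ab0 xa yb exy.
Qed.

Lemma muln_eq_dvd (m x y : nat) : (0 < m)%N ->
  (x * y == m)%N = (x %| m)%N && (y == m %/ x)%N.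
Proof.
move=> m0; apply/eqP/andP => [exy | [/divnK xm /eqP->]]; last by rewrite mulnC.
have x0 : (0 < x)%N by move: m0; rewrite -exy muln_gt0 => /andP[].
by rewrite -exy dvdn_mulr // mulKn.
Qed.

Section FactorSums.

Variable R : nmodType.

Lemma sum_nat_single (N k : nat) (F : nat -> R) : (k < N)%N ->
  (forall i, i != k -> F i = 0) -> \sum_(0 <= i < N) F i = F k.
Proof.
move=> kN F0; rewrite (bigD1_seq k) ?mem_iota ?subn0 ?iota_uniq //=.
by rewrite big1 ?addr0 // => i /F0.
Qed.

Lemma sum_nat_pred1 (N k : nat) (F : nat -> R) :
  \sum_(0 <= i < N | i == k) F i = if (k < N)%N then F k else 0.
Proof.
case: ltnP => kN.
  by rewrite big_mkcond (sum_nat_single kN) ?eqxx // => i /negbTE->.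
rewrite big_nat_cond big_pred0 // => i.
by case: eqP => [->|]; rewrite ?andbF // ltnNge kN andbF.
Qed.

Lemma sum_divisors_box (N m : nat) (f : nat -> nat -> R) : (0 < m)%N -> (m < N)%N ->
  \sum_(d <- divisors m) f d (m %/ d)%N =
  \sum_(0 <= x < N) \sum_(0 <= y < N | (x * y == m)%N) f x y.
Proof.
move=> m0 mN.
transitivity (\sum_(0 <= x < N | (x %| m)%N) f x (m %/ x)%N).
  rewrite -[RHS]big_filter; apply: perm_big; apply: uniq_perm.
  - exact: divisors_uniq.
  - by rewrite filter_uniq ?iota_uniq.
  move=> x; rewrite mem_filter mem_iota -dvdn_divisors //= subn0.
  by case: (boolP (x %| m)%N) => // /(dvdn_leq m0) xm; rewrite (leq_ltn_trans xm).
rewrite big_mkcond; apply: eq_bigr => x _.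
under eq_bigl => y do rewrite muln_eq_dvd //.
case: ifP => _ /=; last by rewrite big_pred0.
by rewrite sum_nat_pred1 (leq_ltn_trans (leq_div m x)).
Qed.

(* The box [0, m]^3 contains every ordered factorisation [m = x y z] when [m > 0]. *)
Definition sum_factors3 (m : nat) (g : nat -> nat -> nat -> R) : R :=
  \sum_(0 <= x < m.+1) \sum_(0 <= y < m.+1) \sum_(0 <= z < m.+1 | (x * y * z == m)%N)
    g x y z.

Lemma eq_sum_factors3 (m : nat) (g h : nat -> nat -> nat -> R) : (0 < m)%N ->
  (forall x y z, (0 < x)%N -> (0 < y)%N -> (0 < z)%N -> (x * y * z = m)%N ->
     g x y z = h x y z) ->
  sum_factors3 m g = sum_factors3 m h.
Proof.
move=> m0 egh; apply: eq_bigr => x _; apply: eq_bigr => y _.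
apply: eq_bigr => z /eqP exyz; move: m0; rewrite -exyz !muln_gt0 => /andP[/andP[x0 y0] z0].
exact: egh.
Qed.

Lemma sum_factors3_rot (m : nat) (g : nat -> nat -> nat -> R) :
  sum_factors3 m (fun x y z => g y z x) = sum_factors3 m g.
Proof.
rewrite /sum_factors3.
under eq_bigr => x _ do under eq_bigr => y _ do rewrite big_mkcond.
rewrite exchange_big /=; apply: eq_bigr => y _.
rewrite exchange_big /=; apply: eq_bigr => z _.
rewrite [RHS]big_mkcond /=; apply: eq_bigr => x _.
by rewrite -mulnA mulnC.
Qed.

Lemma sum_factors3_single (m a b c : nat) (g : nat -> nat -> nat -> R) :
  (0 < m)%N -> (a * b * c = m)%N ->
  (forall x y z, (x * y * z = m)%N -> (x, y, z) != (a, b, c) -> g x y z = 0) ->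
  sum_factors3 m g = g a b c.
Proof.
move=> m0 abc g0; have : (0 < a * b * c)%N by rewrite abc.
rewrite !muln_gt0 => /andP[/andP[a0 b0] c0].
have am : (a < m.+1)%N by rewrite ltnS -abc -mulnA leq_pmulr // muln_gt0 b0.
have bm : (b < m.+1)%N by rewrite ltnS -abc mulnAC leq_pmull // muln_gt0 a0.
have cm : (c < m.+1)%N by rewrite ltnS -abc leq_pmull // muln_gt0 a0.
rewrite /sum_factors3 (sum_nat_single am) => [|x xa]; last first.
  by rewrite big1 // => y _; rewrite big1 // => z /eqP/g0->; rewrite // !xpair_eqE (negbTE xa).
rewrite (sum_nat_single bm) => [|y yb]; last first.
  by rewrite big1 // => z /eqP/g0->; rewrite // !xpair_eqE (negbTE yb) andbF.
rewrite big_mkcond (sum_nat_single cm) ?abc ?eqxx // => z zc.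
by case: eqP => // /g0->; rewrite // !xpair_eqE (negbTE zc) andbF.
Qed.

Lemma sum_factors3_nested (m : nat) (f : nat -> nat -> nat -> nat -> R) :
  (0 < m)%N ->
  \sum_(0 <= d < m.+1) \sum_(0 <= e < m.+1 | (d * e == m)%N)
     \sum_(0 <= x < m.+1) \sum_(0 <= y < m.+1 | (x * y == d)%N) f d e x y =
  sum_factors3 m (fun x y z => f (x * y)%N z x y).
Proof.
move=> m0; symmetry.
transitivity (\sum_(0 <= x < m.+1) \sum_(0 <= y < m.+1) \sum_(0 <= d < m.+1)
  \sum_(0 <= e < m.+1 | (d * e == m)%N) if (x * y == d)%N then f d e x y else 0).
  apply: eq_bigr => x _; apply: eq_bigr => y _.
  have pull d : \sum_(0 <= e < m.+1 | (d * e == m)%N)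
      (if (x * y == d)%N then f d e x y else 0) =
    if (x * y == d)%N then \sum_(0 <= e < m.+1 | (d * e == m)%N) f d e x y else 0.
    by case: eqP => // _; rewrite big1.
  under [RHS]eq_bigr => d _ do rewrite pull.
  rewrite -[RHS]big_mkcond /=.
  under [RHS]eq_bigl => d do rewrite eq_sym.
  rewrite sum_nat_pred1; case: ltnP => [// | mxy].
  rewrite big_pred0 // => z; apply/negbTE; rewrite neq_ltn.
  case: z => [|z]; first by rewrite muln0 m0.
  by rewrite orbC (leq_trans mxy) // leq_pmulr.
under eq_bigr => x _ do rewrite exchange_big.
under eq_bigr => x _ do under eq_bigr => d _ do rewrite exchange_big.
rewrite exchange_big /=; apply: eq_bigr => d _.
rewrite exchange_big /=; apply: eq_bigr => e _.
by apply: eq_bigr => x _; rewrite [RHS]big_mkcond.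
Qed.

End FactorSums.

Section Convolution.

Variables (C : numClosedFieldType) (W : nat -> nat -> C).

Lemma wconvE (F G : nat -> C) (N m : nat) : (0 < m)%N -> (m < N)%N ->
  wconv W F G m =
  \sum_(0 <= x < N) \sum_(0 <= y < N | (x * y == m)%N) F x * G y * W x y.
Proof. exact: (sum_divisors_box (fun a b => F a * G b * W a b)). Qed.

Lemma wconv_wconvl (F G H : nat -> C) (m : nat) : (0 < m)%N ->
  wconv W (wconv W F G) H m =
  sum_factors3 m (fun x y z => F x * G y * H z * (W x y * W (x * y)%N z)).
Proof.
move=> m0; rewrite (wconvE _ _ m0 (ltnSn m)).
rewrite -(sum_factors3_nested (fun d e x y => F x * G y * H e * (W x y * W d e))) //.
apply: eq_bigr => d _; apply: eq_bigr => e /eqP de.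
have : (0 < d * e)%N by rewrite de.
rewrite muln_gt0 => /andP[d0 e0].
have dm : (d < m.+1)%N by rewrite ltnS -de leq_pmulr.
rewrite (wconvE _ _ d0 dm) !big_distrl; apply: eq_bigr => x _.
rewrite !big_distrl; apply: eq_bigr => y _ /=.
by rewrite -!mulrA [W x y * _]mulrCA.
Qed.

Definition divisor_ind (k n : nat) : C := (n %| k)%:R.

Lemma divisor_ind_mult (k : nat) : arith_mult (divisor_ind k).
Proof.
split=> [|x y _ _ cxy]; first by rewrite /divisor_ind dvd1n.
by rewrite /divisor_ind Gauss_dvd // -mulnb natrM.
Qed.

Lemma wconvA_divisor_ind (a b c : nat) : (0 < a)%N -> (0 < b)%N -> (0 < c)%N ->
  wconv W (wconv W (divisor_ind a) (divisor_ind b)) (divisor_ind c) (a * b * c) =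
  W a b * W (a * b)%N c.
Proof.
move=> a0 b0 c0; have abc0 : (0 < a * b * c)%N by rewrite !muln_gt0 a0 b0 c0.
rewrite wconv_wconvl // (sum_factors3_single abc0 (erefl _)) /divisor_ind.
  by rewrite !dvdnn !mul1r.
move=> x y z exyz; rewrite !xpair_eqE.
case xa : (x %| a)%N; last by rewrite !mul0r.
case yb : (y %| b)%N; last by rewrite mulr0 !mul0r.
case zc : (z %| c)%N; last by rewrite mulr0 mul0r.
by have [-> -> ->] := dvdn_mul3_eq abc0 xa yb zc exyz; rewrite !eqxx.
Qed.

End Convolution.

Theorem mainTheorem7 (C : numClosedFieldType) (W : nat -> nat -> C)
  (hM : forall F G : nat -> C, arith_mult F -> arith_mult G ->
          arith_mult (wconv W F G))
  (hComm : forall F G : nat -> C, arith_mult F -> arith_mult G ->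
          forall m : nat, (0 < m)%N -> wconv W F G m = wconv W G F m) :
  (forall F G H : nat -> C, arith_mult F -> arith_mult G -> arith_mult H ->
     forall m : nat, (0 < m)%N ->
       wconv W (wconv W F G) H m = wconv W F (wconv W G H) m)
  <->
  (forall a b c : nat, (0 < a)%N -> (0 < b)%N -> (0 < c)%N ->
     W a b * W (a * b)%N c = W b c * W (b * c)%N a).
Proof.
split=> [hA a b c a0 b0 c0 | hW F G H hF hG hH m m0].
- have abc0 : (0 < a * b * c)%N by rewrite !muln_gt0 a0 b0 c0.
  have Im := divisor_ind_mult C.
  have := hA _ _ _ (Im a) (Im b) (Im c) _ abc0.
  rewrite (hComm _ _ (Im a) (hM _ _ (Im b) (Im c)) _ abc0).
  rewrite wconvA_divisor_ind // (_ : a * b * c = b * c * a)%N; last first.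
    by rewrite -mulnA mulnC.
  by rewrite wconvA_divisor_ind.
- rewrite (hComm _ _ hF (hM _ _ hG hH) _ m0) !wconv_wconvl // -[RHS]sum_factors3_rot.
  apply: (eq_sum_factors3 m0) => x y z x0 y0 z0 _.
  by rewrite hW // -(mulrA (F x)) (mulrC (F x)).
Qed.
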